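(* With the parameter choices specified below, the DI-VKECM scheme described below satisfies the completeness property when all parties and devices behave honestly: for every message $m\in\{0,1\}^\lambda$, \[ \Pr\left[\left(F = \text{accept}\right)\land\left(\mathsf{Dec}\circ\mathsf{KeyRel}\circ\mathsf{Enc}(1^\lambda, m) = m\right)\right] \geq 1-\left(e^{-\delta_{\gamma,\alpha}^2 \lambda/8} + p_\mathrm{err}(\lambda)\right), \] where $p_\mathrm{err}$ is the failure-probability function of the error-correction procedure described below.
   Context: Security parameter $\lambda$; device input/output length $l=\lambda$; message space $\mathcal{M}=\{0,1\}^\lambda$. $\omega^*(\mathrm{CHSH})=\frac12(1+\frac1{\sqrt2})$ is the quantum value of the CHSH game. Honest devices (with depolarizing noise $q\in[0,1/2]$): client and receiver share $l$ i.i.d. copies of the Werner state $\rho_q=(1-2q)|\Phi^+\rangle\langle\Phi^+| + 2q\,\mathbb{1}/4$, $|\Phi^+\rangle=\frac{1}{\sqrt2}(|00\rangle+|11\rangle)$. On the $i$-th copy the client's device, on input $x_i\in\{0,1\}$, performs Alice's ideal CHSH measurement (computational basis for $x_i=0$, basis $\{|\pi/4\rangle,|-\pi/4\rangle\}$ for $x_i=1$, with $|\theta\rangle=\cos\theta|0\rangle+\sin\theta|1\rangle$). The receiver's device on input $y_i\in\{0,1\}$ performs Bob's ideal CHSH measurement ($\{|\pi/8\rangle,|-3\pi/8\rangle\}$ for 0, $\{|3\pi/8\rangle,|-\pi/8\rangle\}$ for 1), on $y_i\in\{2,3\}$ performs Alice's ideal measurement for input $y_i-2$, and on $y_i=\perp$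 outputs 0 without measuring; the receiver's device can be given inputs twice (once in encryption, once in decryption). Error correction: if Alice and Bob hold $l$ i.i.d. samples of $(C_i,C'_i)$, then for any $\xi>1$, $\beta<1/2$ there is an efficient procedure where Alice sends a syndrome of length $\xi\,\mathsf{H}(C_i|C'_i)\,l$ and Bob's guess of $C$ is wrong with probability at most $p_\mathrm{err}(l)=O(2^{-l^\beta})$. It is applied with $(C_i,C'_i)=(\tilde A_i,(\tilde S_i,U_i,\tilde X_i))$ for the honest devices, giving syndrome length $\ell_{\mathrm{syn}}=\xi(1-\gamma)(1-\alpha)h_2(q)\,l$ ($h_2$ = binary entropy). Scheme. $\mathsf{Enc}(1^\lambda,m)$: client samples $X\in\{0,1\}^l$ uniformly and independently $U_i\in\{\mathrm{keep},0,1\}$ with probabilities $1-\gamma,\gamma/2,\gamma/2$; client inputs $X$ into its device, gets $A$; sends $U$ to the receiver, who inputs $U$ (keep read as $\perp$), gets $S$ and sends $S$ back. Test: the number of $i$ with $U_i\ne\mathrm{keep}$ and $A_i\oplus S_i\ne X_i\cdot U_i$ is at most $(\gamma(1-\omega^*(\mathrm{CHSH}))+\delta_{\gamma,\alpha}/2)l$. If it passes, $F=$ accept, client samples uniform $R\in\mathcal{M}$ and sends $C=m\oplus R$; otherwise $F=$ reject and client sends a uniform dummy $C$. Private key $(X,U,A,R)$. $\mathsf{KeyRel}$: sample $\tilde X_i=\perp$ with probability $\alpha$, else $\tilde X_i=X_i+2$; set $\tilde A_i=0$ if $U_i\neq\mathrm{keep}$ or $\tilde X_i=\perp$, else $\tilde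 A_i=A_i$; compute syndrome $\mathrm{syn}(\tilde A)$; release $(R\oplus\tilde A,\mathrm{syn}(\tilde A),\tilde X)$. $\mathsf{Dec}$: input $\tilde X$ into the receiver's device, get $S'$; set $\tilde S_i=0$ if $U_i\ne\mathrm{keep}$ or $\tilde X_i=\perp$, else $\tilde S_i=S'_i$; use $\tilde S,U,\tilde X,\mathrm{syn}(\tilde A)$ to guess $\hat A$; output $C\oplus(R\oplus\tilde A)\oplus\hat A$. Parameters: $\xi>1$, $\gamma,\alpha\in(0,1)$; $\delta_{\gamma,\alpha}>0$ is a constant such that the anchored two-round cloning game $\mathrm{CLONE}_{\gamma,\alpha}$ has quantum value at most $(1-\gamma)+\gamma\omega^*(\mathrm{CHSH})-\delta_{\gamma,\alpha}$; $\kappa>0$ is the constant from the parallel repetition bound for that game; and the honest noise satisfies $q<\delta_{\gamma,\alpha}/4$ and $2\xi(1-\gamma)(1-\alpha)h_2(q)<\kappa\delta_{\gamma,\alpha}^3\alpha^4$. *)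

From HB Require Import structures.
From mathcomp Require Import all_boot all_order all_algebra.
From mathcomp Require Import all_classical all_reals all_analysis.
Set Implicit Arguments. Unset Strict Implicit. Unset Printing Implicit Defensive.
Import Order.TTheory GRing.Theory Num.Theory.
Local Open Scope ring_scope.

Section DIVKECM.
Variable R : realType.

Definition kron m1 n1 m2 n2 (A : 'M[R]_(m1.+1, n1.+1)) (B : 'M[R]_(m2.+1, n2.+1))
  : 'M[R]_(m1.+1 * m2.+1, n1.+1 * n2.+1) :=
  \matrix_(i, j) (A (inord (i %/ m2.+1)) (inord (j %/ n2.+1))
                  * B (inord (i %% m2.+1)) (inord (j %% n2.+1))).

Definition ket (th : R) : 'cV[R]_2 :=
  \col_(i < 2) (if i == ord0 then cos th else sin th).

Definition proj (th : R) : 'M[R]_2 := ket th *m (ket th)^T.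

Definition e0 : 'cV[R]_2 := \col_(i < 2) (i == ord0)%:R.
Definition e1 : 'cV[R]_2 := \col_(i < 2) (i != ord0)%:R.

Definition phiplus : 'cV[R]_(2 * 2) :=
  (Num.sqrt 2)^-1 *: (kron e0 e0 + kron e1 e1).

Definition werner (q : R) : 'M[R]_(2 * 2) :=
  (1 - 2 * q) *: (phiplus *m phiplus^T) + (2 * q / 4) *: 1%:M.

Definition born (rho : 'M[R]_(2 * 2)) (A B : 'M[R]_2) : R := \tr (rho *m kron A B).

Definition alice_angle (x a : bool) : R :=
  match x, a with
  | false, false => 0
  | false, true => pi / 2
  | true, false => pi / 4
  | true, true => - (pi / 4)
  end.
Definition aliceP (x a : bool) : 'M[R]_2 := proj (alice_angle x a).

(* Outcome labels are those making the
   strategy the optimal CHSH strategy -- winning with prob. omega-star: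
   for y = 1 outcome 0 is |-pi/8> and outcome 1 is |3pi/8>. *)
Definition bob_angle (y b : bool) : R :=
  match y, b with
  | false, false => pi / 8
  | false, true => - (3 * pi / 8)
  | true, false => - (pi / 8)
  | true, true => 3 * pi / 8
  end.
Definition bobP (y b : bool) : 'M[R]_2 := proj (bob_angle y b).

(* inputs of the receiver's device: y in {0,1} (Bob), y in {2,3} (Alice y-2), bot *)
Inductive recv_in := RBob of bool | RAlice of bool | RBot.

(* effect (projector) of outcome b of the receiver's device on input y;
   on bot the device outputs 0 without measuring (effects 1 and 0) *)
Definition recvP (y : recv_in) (b : bool) : 'M[R]_2 :=
  match y with
  | RBob y' => bobP y' b
  | RAlice x => aliceP x b
  | RBot => if b then 0 else 1%:M
  end.

(* U_i in {keep,0,1} is encoded as option bool (None = keep);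
   Xtil_i in {bot,2,3} is encoded as option bool (None = bot, Some x = x+2). *)

Definition enc_in (u : option bool) : recv_in :=
  if u is Some y then RBob y else RBot.              (* keep is read as bot *)
Definition dec_in (xt : option bool) : recv_in :=
  if xt is Some x then RAlice x else RBot.

Definition xtil1 (x bt : bool) : option bool := if bt then None else Some x.

Variables (gamma alpha q : R).

Definition pU (u : option bool) : R :=
  if u is Some _ then gamma / 2 else 1 - gamma.
Definition pBot (bt : bool) : R := if bt then alpha else 1 - alpha.

(* joint probability, for one copy, of: X_i = x, U_i = u, [Xtil_i = bot] = bt,
   client output A_i = a, receiver outputs S_i = s (encryption) and
   S'_i = s' (decryption).  The receiver's two uses of its half of the copy are
   sequential projective (Lueders) measurements. *)
Definition pround (x : bool) (u : option bool) (bt a s s' : bool) : R :=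
  (1 / 2) * pU u * pBot bt *
  born (werner q) (aliceP x a)
    (recvP (enc_in u) s *m recvP (dec_in (xtil1 x bt)) s' *m recvP (enc_in u) s).

Definition atil1 (u : option bool) (bt a : bool) : bool :=
  if (u != None) || bt then false else a.

(* marginal distribution of (C_i, C'_i) = (Atil_i, (Stil_i, U_i, Xtil_i)) *)
Definition pCC (c : bool * (bool * option bool * option bool)) : R :=
  \sum_(x : bool) \sum_(u : option bool) \sum_(bt : bool) \sum_(a : bool)
   \sum_(s : bool) \sum_(s' : bool)
     pround x u bt a s s' *
     ((atil1 u bt a, (atil1 u bt s', u, xtil1 x bt)) == c)%:R.

Variable l : nat.
Variables (delta : R).

Definition omega_chsh : R := (1 + (Num.sqrt 2)^-1) / 2.

Definition bits := {ffun 'I_l -> bool}.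

Definition xor_bits (m1 m2 : bits) : bits := [ffun i => m1 i (+) m2 i].

Definition nfail (x : bits) (u : {ffun 'I_l -> option bool}) (a s : bits) : nat :=
  #|[set i : 'I_l | if u i is Some y then (a i (+) s i) != (x i && y) else false]|.

Definition accepts (x : bits) (u : {ffun 'I_l -> option bool}) (a s : bits) : bool :=
  (nfail x u a s)%:R <= (gamma * (1 - omega_chsh) + delta / 2) * l%:R.

Variables (Syn : Type) (syn : bits -> Syn)
          (guess : {ffun 'I_l -> bool * option bool * option bool} -> Syn -> bits).

(* error probability of the error-correction procedure on l i.i.d. samples of
   (C_i, C'_i) distributed according to pCC *)
Definition ec_error : R :=
  \sum_(cc : {ffun 'I_l -> bool * (bool * option bool * option bool)})
    (\prod_(i < l) pCC (cc i)) *
    (guess [ffun i => (cc i).2] (syn [ffun i => (cc i).1]) != [ffun i => (cc i).1])%:R.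

(* Enc, KeyRel, Dec run on the sampled randomness; returns (F = accept, output) *)
Definition run (m : bits) (x : bits) (u : {ffun 'I_l -> option bool}) (bt a s s' : bits)
  (r cd : bits) : bool * bits :=
  let F := accepts x u a s in
  let C := if F then xor_bits m r else cd in            (* Enc *)
  let Xt := [ffun i => xtil1 (x i) (bt i)] in           (* KeyRel *)
  let At := [ffun i => atil1 (u i) (bt i) (a i)] in
  let key := xor_bits r At in
  let sy := syn At in
  let St := [ffun i => atil1 (u i) (bt i) (s' i)] in     (* Dec *)
  let Ahat := guess [ffun i => (St i, u i, Xt i)] sy in
  (F, xor_bits (xor_bits C key) Ahat).

Definition success_prob (m : bits) : R :=
  \sum_(x : bits) \sum_(u : {ffun 'I_l -> option bool}) \sum_(bt : bits)
  \sum_(a : bits) \sum_(s : bits) \sum_(s' : bits) \sum_(r : bits) \sum_(cd : bits)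
    (\prod_(i < l) pround (x i) (u i) (bt i) (a i) (s i) (s' i))
    * (2 ^+ l)^-1 * (2 ^+ l)^-1
    * (let o := run m x u bt a s s' r cd in o.1 && (o.2 == m))%:R.

End DIVKECM.

Definition h2 (R : realType) (p : R) : R :=
  - (p * ln p + (1 - p) * ln (1 - p)) / ln 2.

From Pilot Require Import Defs.
From HB Require Import structures.
From mathcomp Require Import all_boot all_order all_algebra.
From mathcomp Require Import all_classical all_reals all_analysis.
From mathcomp Require Import ring lra.
Import Order.TTheory GRing.Theory Num.Theory.
Set Implicit Arguments. Unset Strict Implicit. Unset Printing Implicit Defensive.
Local Open Scope ring_scope.

(* The honest run consists of [l] independent copies of a one-round experiment,
   so the success probability is an expectation under a product distribution,
   and the run can only fail if the CHSH test rejects or the corrected key is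
   wrong.  Pushing the product distribution forward to the pairs (C_i, C'_i)
   identifies the second probability with [ec_error].  For the first, summing
   out the receiver's decryption outcome leaves the one-shot CHSH statistics of
   the Werner state: writing w for the CHSH value, each copy fails the test
   independently with probability p = gamma ((1 - 2q) (1 - w) + q), which is at
   most gamma (1 - w) + q.  As q < delta / 4, the threshold gamma (1 - w) + delta / 2
   exceeds p by at least delta / 4, and Hoeffding's inequality bounds the
   rejection probability by exp (-2 (delta / 4)^2 l) = exp (- delta^2 l / 8). *)

Section BernoulliMGF.
Variables (R : realType) (p : R).
Hypotheses (p_ge0 : 0 <= p) (p_le1 : p <= 1).

Let mgf_gt0 z : 0 < 1 - p + p * expR z.
Proof.
have e_gt0 := expR_gt0 z.
have [->|p_neq1] := eqVneq p 1; first by rewrite subrr add0r mul1r.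
have p_lt1 : p < 1 by rewrite lt_neqAle p_neq1 p_le1.
have := mulr_ge0 p_ge0 (ltW e_gt0); lra.
Qed.

Let mgf_derive (y : R) : is_derive y 1 (fun z => 1 - p + p * expR z) (p * expR y).
Proof. by apply: trigger_derive; rewrite /GRing.scale /= add0r mul1r. Qed.

Lemma bernoulli_tilt_le x : 0 <= x ->
  p * expR x / (1 - p + p * expR x) <= p + x / 4.
Proof.
move=> x_ge0.
pose f z := p + z / 4 - p * expR z / (1 - p + p * expR z).
have df (y : R) : is_derive y 1 f ((p * expR y / (1 - p + p * expR y) - 2^-1) ^+ 2).
  have mgf_neq0 : 1 - p + p * expR y != 0 by rewrite gt_eqF ?mgf_gt0.
  have dV := @is_deriveV R (fun z => 1 - p + p * expR z) y _ 1 mgf_neq0 (mgf_derive y).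
  by rewrite /f; apply: trigger_derive; rewrite /GRing.scale /=; field.
have f_derivable z : derivable f z 1 by have [] := df z.
have : f 0 <= f x.
  apply: (@ger0_derive1_ndecr R f 0 x) => //.
  - by move=> z _; rewrite derive1E; have [_ ->] := df z; exact: sqr_ge0.
  - by apply: derivable_within_continuous => z _; exact: f_derivable.
rewrite /f expR0 mul0r addr0 mulr1 subrK divr1 subrr; lra.
Qed.

Lemma bernoulli_mgf_le x : 0 <= x ->
  1 - p + p * expR x <= expR (p * x + x ^+ 2 / 8).
Proof.
move=> x_ge0.
pose G z := (1 - p + p * expR z) * expR (- (p * z + z ^+ 2 / 8)).
have dG (y : R) : is_derive y 1 G (expR (- (p * y + y ^+ 2 / 8)) *
    (p * expR y - (p + y / 4) * (1 - p + p * expR y))).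
  have dg : is_derive y 1 (fun z => - (p * z + z ^+ 2 / 8)) (- (p + y / 4)).
    by apply: trigger_derive; rewrite /GRing.scale /=; field.
  have dE := is_derive1_comp (is_derive_expR _) dg.
  have dM := mgf_derive y.
  by rewrite /G; apply: trigger_derive; rewrite /GRing.scale /=; ring.
have G_derivable z : derivable G z 1 by have [] := dG z.
have : G x <= G 0.
  apply: (@ler0_derive1_le_cc R G 0 x).
  - by move=> z _; exact: G_derivable.
  - move=> z; rewrite in_itv /= => /andP[z_gt0 _]; rewrite derive1E.
    have [_ ->] := dG z; rewrite pmulr_rle0 ?expR_gt0 // subr_le0.
    by have := bernoulli_tilt_le (ltW z_gt0); rewrite ler_pdivrMr ?mgf_gt0 // mulrC.
  - by apply: derivable_within_continuous => z _; exact: G_derivable.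
  - by rewrite in_itv /= lexx x_ge0.
  - by rewrite in_itv /= lexx x_ge0.
  - exact: x_ge0.
rewrite /G mulr0 expr0n /= mul0r !add0r oppr0 expR0 !mulr1 subrK expRN.
by rewrite ler_pdivrMr ?expR_gt0 // mul1r.
Qed.

End BernoulliMGF.

Lemma sum_option (V : nmodType) (T : finType) (F : option T -> V) :
  \sum_u F u = F None + \sum_t F (Some t).
Proof.
rewrite (perm_big (None :: map Some (enum T))) /=; last first.
  apply: uniq_perm; first exact: index_enum_uniq.
    rewrite /= map_inj_uniq ?enum_uniq ?andbT; last exact: Some_inj.
    by apply/mapP => -[].
  by move=> u; case: u => [t|]; rewrite mem_index_enum //= inE /= map_f ?mem_enum.
by rewrite big_cons big_map big_enum.
Qed.

Section ProductWeights.
Variables (R : realType) (I : finType).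

Definition ffun_fst (A B : finType) (z : {ffun I -> A * B}) : {ffun I -> A} :=
  [ffun i => (z i).1].
Definition ffun_snd (A B : finType) (z : {ffun I -> A * B}) : {ffun I -> B} :=
  [ffun i => (z i).2].

Lemma sum_ffun_pair (A B : finType) (F : {ffun I -> A} -> {ffun I -> B} -> R) :
  \sum_x \sum_y F x y = \sum_(z : {ffun I -> A * B}) F (ffun_fst z) (ffun_snd z).
Proof.
rewrite pair_big (reindex (fun z => (ffun_fst z, ffun_snd z))) //=.
exists (fun xy : {ffun I -> A} * {ffun I -> B} => [ffun i => (xy.1 i, xy.2 i)]).
  by move=> z _ /=; apply/ffunP => i; rewrite !ffunE; case: (z i).
by move=> [x y] _ /=; congr (_, _); apply/ffunP => i; rewrite !ffunE.
Qed.

Lemma sum_prod_ffun (T : finType) (w : T -> R) :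
  \sum_(z : {ffun I -> T}) \prod_i w (z i) = (\sum_t w t) ^+ #|I|.
Proof.
transitivity (\prod_(i : I) \sum_t w t); last by rewrite prodr_const.
by rewrite bigA_distr_bigA.
Qed.

Lemma prod_eq_indicator (S : finType) (c d : {ffun I -> S}) :
  \prod_i ((c i == d i)%:R : R) = (c == d)%:R.
Proof.
have [->|c_neq_d] := eqVneq c d; first by rewrite big1 // => i _; rewrite eqxx.
have [i ci_neq_di] : exists i, c i != d i.
  apply/existsP; apply: contraR c_neq_d => /existsPn c_eq_d.
  by apply/eqP/ffunP => i; apply/eqP/negPn.
by rewrite (bigD1 i) //= (negbTE ci_neq_di) mul0r.
Qed.

Lemma sum_prod_ffun_map (T S : finType) (w : T -> R) (g : T -> S)
    (H : {ffun I -> S} -> R) :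
  \sum_(z : {ffun I -> T}) (\prod_i w (z i)) * H [ffun i => g (z i)] =
  \sum_(c : {ffun I -> S}) (\prod_i \sum_t w t * (g t == c i)%:R) * H c.
Proof.
have fiber (c : {ffun I -> S}) : \prod_i (\sum_t w t * (g t == c i)%:R) =
    \sum_(z : {ffun I -> T}) (\prod_i w (z i)) * ([ffun i => g (z i)] == c)%:R.
  rewrite bigA_distr_bigA; apply: eq_bigr => z _.
  rewrite big_split /= -prod_eq_indicator; congr (_ * _).
  by apply: eq_bigr => i _; rewrite ffunE.
under [RHS]eq_bigr => c _ do rewrite fiber mulr_suml.
rewrite exchange_big /=; apply: eq_bigr => z _.
rewrite (bigD1 [ffun i => g (z i)]) //= eqxx mulr1 [X in _ + X]big1 ?addr0 // => c.
by rewrite eq_sym => /negbTE ->; rewrite mulr0 mul0r.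
Qed.

Lemma chernoff_bound (T : finType) (w : T -> R) (f : pred T) (c t : R) :
  (forall x, 0 <= w x) -> 0 <= t ->
  \sum_(z : {ffun I -> T}) (\prod_i w (z i)) * (~~ (\sum_i ((f (z i))%:R : R) <= c))%:R
    <= expR (- (t * c)) * (\sum_x w x * expR (t * (f x)%:R)) ^+ #|I|.
Proof.
move=> w_ge0 t_ge0.
have tail_le (N : R) : ((~~ (N <= c))%:R : R) <= expR (t * (N - c)).
  have [_|N_gt_c] := boolP (N <= c); first by rewrite mulr0n expR_ge0.
  rewrite mulr1n; apply: le_trans (expR_ge1Dx _).
  by rewrite lerDl mulr_ge0 // subr_ge0 ltW // ltNge.
have step (z : {ffun I -> T}) :
    (\prod_i w (z i)) * (~~ (\sum_i ((f (z i))%:R : R) <= c))%:R <=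
    expR (- (t * c)) * \prod_i (w (z i) * expR (t * (f (z i))%:R)).
  have W_ge0 : 0 <= \prod_i w (z i) by apply: prodr_ge0.
  apply: le_trans (ler_wpM2l W_ge0 (tail_le _)) _.
  rewrite mulrBr mulr_sumr addrC expRD expR_sum big_split /= mulrCA.
  exact: lexx.
apply: le_trans (ler_sum _ (fun z _ => step z)) _.
by rewrite -mulr_sumr (sum_prod_ffun (fun x => w x * expR (t * (f x)%:R))).
Qed.

Lemma hoeffding_bound (T : finType) (w : T -> R) (f : pred T) (s c : R) :
  (forall x, 0 <= w x) -> \sum_x w x = 1 -> 0 <= s ->
  (\sum_x w x * (f x)%:R + s) * #|I|%:R <= c ->
  \sum_(z : {ffun I -> T}) (\prod_i w (z i)) * (~~ (\sum_i ((f (z i))%:R : R) <= c))%:R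
    <= expR (- (2 * s ^+ 2 * #|I|%:R)).
Proof.
move=> w_ge0 w_sum1 s_ge0; set p := \sum_x _; set n := #|I|%:R => c_ge.
have p_ge0 : 0 <= p by apply: sumr_ge0 => x _; rewrite mulr_ge0.
have p_le1 : p <= 1.
  by rewrite -w_sum1; apply: ler_sum => x _; case: (f x); rewrite ?mulr1 ?mulr0.
have t_ge0 : 0 <= 4 * s by rewrite mulr_ge0.
have mgfE : \sum_x w x * expR (4 * s * (f x)%:R) = 1 - p + p * expR (4 * s).
  have mgf_term x : w x * expR (4 * s * (f x)%:R) =
      w x + (expR (4 * s) - 1) * (w x * (f x)%:R).
    by case: (f x); rewrite /= ?mulr1 ?mulr0 ?expR0; ring.
  by under eq_bigr do rewrite mgf_term; rewrite big_split /= -mulr_sumr w_sum1 -/p; ring.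
have mgf_le : (1 - p + p * expR (4 * s)) ^+ #|I| <=
    expR (n * (p * (4 * s) + (4 * s) ^+ 2 / 8)).
  rewrite /n [X in _ <= X]expRM_natl; apply: lerXn2r; last exact: bernoulli_mgf_le.
    by rewrite nnegrE; have := mulr_ge0 p_ge0 (expR_ge0 (4 * s)); lra.
  by rewrite nnegrE expR_ge0.
(* [t = 4 s] minimises the Chernoff exponent [n (p t + t^2 / 8) - t (p + s) n]. *)
apply: le_trans (@chernoff_bound T w f c (4 * s) w_ge0 t_ge0) _; rewrite mgfE.
apply: le_trans (ler_wpM2l (expR_ge0 _) mgf_le) _.
rewrite -expRD ler_expR.
have n_ge0 : 0 <= n by rewrite ler0n.
have : 4 * s * ((p + s) * n) <= 4 * s * c by rewrite ler_wpM2l.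
nra.
Qed.

Lemma sum_andb_ge (Z : finType) (W : Z -> R) (A B : pred Z) :
  (forall z, 0 <= W z) -> \sum_z W z = 1 ->
  1 - (\sum_z W z * (~~ A z)%:R + \sum_z W z * (~~ B z)%:R)
    <= \sum_z W z * (A z && B z)%:R.
Proof.
move=> W_ge0 W_sum1; rewrite -{1}W_sum1 opprD addrA -!sumrB; apply: ler_sum => z _.
have := W_ge0 z; case: (A z); case: (B z);
  by rewrite /= ?mulr0n ?mulr1n ?mulr0 ?mulr1 => ?; lra.
Qed.

End ProductWeights.

Section Qubits.
Variable R : realType.
(* Unqualified [proj] is the projection of mathcomp_extra. *)
Local Notation proj := (@Defs.proj R).
Implicit Types th ph q : R.

Lemma kronDr m1 n1 m2 n2 (A : 'M[R]_(m1.+1, n1.+1)) (B1 B2 : 'M[R]_(m2.+1, n2.+1)) :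
  kron A (B1 + B2) = kron A B1 + kron A B2.
Proof. by apply/matrixP => i j; rewrite !mxE mulrDr. Qed.

Lemma kronZr m1 n1 m2 n2 (A : 'M[R]_(m1.+1, n1.+1)) (c : R) (B : 'M[R]_(m2.+1, n2.+1)) :
  kron A (c *: B) = c *: kron A B.
Proof. by apply/matrixP => i j; rewrite !mxE mulrCA. Qed.

Lemma bornDr rho (A B1 B2 : 'M[R]_2) :
  born rho A (B1 + B2) = born rho A B1 + born rho A B2.
Proof. by rewrite /born kronDr mulmxDr mxtraceD. Qed.

Lemma bornZr rho (A : 'M[R]_2) c (B : 'M[R]_2) :
  born rho A (c *: B) = c * born rho A B.
Proof. by rewrite /born kronZr -scalemxAr mxtraceZ. Qed.

Let sum_ord2 (F : 'I_2 -> R) : \sum_i F i = F (inord 0) + F (inord 1).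
Proof.
rewrite !big_ord_recl big_ord0 addr0.
by congr (_ + _); congr F; apply/val_inj; rewrite /= inordK.
Qed.

Let sum_ord4 (F : 'I_(2 * 2) -> R) :
  \sum_i F i = F (inord 0) + F (inord 1) + F (inord 2) + F (inord 3).
Proof.
rewrite !big_ord_recl big_ord0 addr0 !addrA.
by congr (_ + _ + _ + _); congr F; apply/val_inj; rewrite /= inordK.
Qed.

Lemma born_werner q (A B : 'M[R]_2) :
  born (werner q) A B = (1 - 2 * q) / 2 * (\sum_i \sum_j A i j * B i j)
    + q / 2 * (\tr A * \tr B).
Proof.
have sqrt2_sqr : Num.sqrt (2 : R) ^+ 2 = 2 by rewrite sqr_sqrtr // ler0n.
have sqrt2_neq0 : Num.sqrt (2 : R) != 0 by rewrite sqrtr_eq0 -ltNge ltr0n.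
have half x y : (Num.sqrt 2)^-1 * x * ((Num.sqrt 2)^-1 * y) = x * y / 2 :> R.
  by rewrite mulrACA -invfM -expr2 sqrt2_sqr mulrC.
rewrite /born /werner /kron /phiplus /e0 /e1 /mxtrace.
rewrite !sum_ord2 !sum_ord4 !mxE !sum_ord4 !mxE !big_ord1 !mxE.
rewrite -!val_eqE /= !inordK //= !half.
rewrite ?(mul0r, mulr0, mul1r, mulr1, addr0, add0r).
by field.
Qed.

Lemma proj_entry th i j : proj th i j = ket th i 0 * ket th j 0.
Proof. by rewrite !mxE big_ord1 !mxE. Qed.

Let ket0 th : ket th (inord 0) 0 = cos th.
Proof. by rewrite mxE -val_eqE /= inordK. Qed.

Let ket1 th : ket th (inord 1) 0 = sin th.
Proof. by rewrite mxE -val_eqE /= inordK. Qed.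

Let mulmx2E (A B : 'M[R]_2) i j :
  (A *m B) i j = A i (inord 0) * B (inord 0) j + A i (inord 1) * B (inord 1) j.
Proof. by rewrite mxE sum_ord2. Qed.

Lemma proj_idem th : proj th *m proj th = proj th.
Proof.
apply/matrixP => i j; rewrite mulmx2E !proj_entry ket0 ket1.
by rewrite -[RHS]mulr1 -(cos2Dsin2 th); ring.
Qed.

Lemma proj_sandwich th ph :
  proj th *m proj ph *m proj th = cos (th - ph) ^+ 2 *: proj th.
Proof.
apply/matrixP => i j.
by rewrite !mulmx2E !proj_entry [RHS]mxE proj_entry !ket0 !ket1 cosB; ring.
Qed.

Lemma projDpi th : proj (th + pi) = proj th.
Proof.
apply/matrixP => i j; rewrite !proj_entry !mxE cosDpi sinDpi.
by case: ifP; case: ifP => _ _; ring.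
Qed.

Lemma proj_addDpihalf th : proj th + proj (th + pi / 2) = 1%:M.
Proof.
have := cos2Dsin2 th; rewrite !expr2 => cos2Dsin2_th.
apply/matrixP => -[[|[|//]] ?] [[|[|//]] ?];
  rewrite mxE !proj_entry !mxE /= ?cosDpihalf ?sinDpihalf ?mulr1n ?mulr0n; lra.
Qed.

Lemma proj_addBpihalf th : proj th + proj (th - pi / 2) = 1%:M.
Proof.
rewrite -(projDpi (th - pi / 2)) (_ : th - pi / 2 + pi = th + pi / 2) //.
  exact: proj_addDpihalf.
by field.
Qed.

Lemma mxtrace_proj th : \tr (proj th) = 1.
Proof. by rewrite /mxtrace sum_ord2 !proj_entry ket0 ket1 -!expr2 cos2Dsin2. Qed.

Lemma born_werner_proj q th ph :
  born (werner q) (proj th) (proj ph) = (1 - 2 * q) / 2 * cos (th - ph) ^+ 2 + q / 2.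
Proof.
rewrite born_werner !mxtrace_proj !sum_ord2 !proj_entry !ket0 !ket1 cosB mulr1.
by congr (_ * _ + _); ring.
Qed.

Lemma born_werner_proj1 q th : born (werner q) (proj th) 1%:M = 1 / 2.
Proof.
rewrite born_werner mxtrace_proj mxtrace1 !sum_ord2 !proj_entry !mxE.
rewrite -!val_eqE /= !inordK //= !mulr1 !mulr0 !addr0 add0r -!expr2 cos2Dsin2.
by field.
Qed.

End Qubits.

Section CHSH.
Variable R : realType.
Local Notation proj := (@Defs.proj R).

Lemma aliceP_sum x : aliceP R x true + aliceP R x false = 1%:M.
Proof.
rewrite /aliceP addrC; case: x => /=; last by have := proj_addDpihalf (0 : R); rewrite add0r.
by rewrite (_ : - (pi / 4) = pi / 4 - pi / 2 :> R) ?proj_addBpihalf //; field.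
Qed.

Lemma bobP_sum y : bobP R y true + bobP R y false = 1%:M.
Proof.
rewrite /bobP addrC; case: y => /=.
- by rewrite (_ : 3 * pi / 8 = - (pi / 8) + pi / 2 :> R) ?proj_addDpihalf //; field.
- by rewrite (_ : - (3 * pi / 8) = pi / 8 - pi / 2 :> R) ?proj_addBpihalf //; field.
Qed.

Lemma recvP_sum y : recvP R y true + recvP R y false = 1%:M.
Proof. by case: y => [y|x|] /=; rewrite ?bobP_sum ?aliceP_sum ?add0r. Qed.

Lemma recvP_idem y b : recvP R y b *m recvP R y b = recvP R y b.
Proof.
case: y => [y|x|] /=; rewrite ?proj_idem //.
by case: b; rewrite ?mul0mx ?mul1mx.
Qed.

Lemma recvP_sandwich y b y' b' : exists2 c : R, 0 <= c &
  (exists th, recvP R y b *m recvP R y' b' *m recvP R y b = c *: proj th) \/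
  recvP R y b *m recvP R y' b' *m recvP R y b = c *: 1%:M.
Proof.
have recvP_cases y'' b'' : (exists th, recvP R y'' b'' = proj th) \/
    recvP R y'' b'' = 1%:M \/ recvP R y'' b'' = 0.
  case: y'' => [y''|x|] /=; [by left; eexists | by left; eexists |].
  by case: b''; right; [right|left].
case: (recvP_cases y b) => [[th ->]|[->|->]].
- case: (recvP_cases y' b') => [[ph ->]|[->|->]].
  + by exists (cos (th - ph) ^+ 2); [exact: sqr_ge0 | left; exists th; rewrite proj_sandwich].
  + by exists 1 => //; left; exists th; rewrite mulmx1 proj_idem scale1r.
  + by exists 0 => //; right; rewrite mulmx0 mul0mx scale0r.
- rewrite mul1mx mulmx1; case: (recvP_cases y' b') => [[ph ->]|[->|->]].
  + by exists 1 => //; left; exists ph; rewrite scale1r.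
  + by exists 1 => //; right; rewrite scale1r.
  + by exists 0 => //; right; rewrite scale0r.
- by exists 0 => //; right; rewrite mul0mx mulmx0 scale0r.
Qed.

Lemma cos_pi4 : cos (pi / 4) = (Num.sqrt 2)^-1 :> R.
Proof.
have cos_ge0 : 0 <= cos (pi / 4) :> R.
  by apply: cos_ge0_pihalf; have := @pi_gt0 R; lra.
have cos_sqr : cos (pi / 4) ^+ 2 = 2^-1 :> R.
  have := cos_mulr2n (pi / 4 : R).
  rewrite (_ : pi / 4 *+ 2 = pi / 2) ?cos_pihalf; last by rewrite mulr2n; field.
  by rewrite mulr2n; lra.
by rewrite -sqrtrV ?ler0n // -cos_sqr sqrtr_sqr ger0_norm.
Qed.

Lemma sin_pi8_sqr : sin (pi / 8) ^+ 2 = 1 - omega_chsh R.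
Proof.
have := cos_mulr2n (pi / 8 : R).
rewrite (_ : pi / 8 *+ 2 = pi / 4) ?cos_pi4; last by rewrite mulr2n; field.
by rewrite /omega_chsh sin2cos2 [cos _ ^+ 2 *+ 2]mulr2n; lra.
Qed.

Definition chsh_fails (x : bool) (u : option bool) (a s : bool) : bool :=
  if u is Some y then a (+) s != x && y else false.

Lemma chsh_fail_angle x y a s : chsh_fails x (Some y) a s ->
  cos (alice_angle R x a - bob_angle R y s) ^+ 2 = sin (pi / 8) ^+ 2.
Proof.
by case: x y a s => [] [] [] [] //= _;
  first [ rewrite (_ : _ - _ = pi / 8 + pi / 2 :> R); last field
        | rewrite (_ : _ - _ = pi / 8 - pi / 2 :> R); last field
        | rewrite (_ : _ - _ = - (pi / 8) + pi / 2 :> R); last field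
        | rewrite (_ : _ - _ = - (pi / 8) - pi / 2 :> R); last field ];
  rewrite ?cosDpihalf ?cosBpihalf ?sinN ?sqrrN.
Qed.

Lemma omega_chsh_ge_half : 1 / 2 <= omega_chsh R.
Proof.
have : 0 <= (Num.sqrt 2 : R)^-1 by rewrite invr_ge0 sqrtr_ge0.
by rewrite /omega_chsh; lra.
Qed.

Lemma omega_chsh_le1 : omega_chsh R <= 1.
Proof.
have sqrt2_ge1 : 1 <= Num.sqrt (2 : R) by rewrite -[X in X <= _]sqrtr1 ler_sqrt // ler1n.
have : (Num.sqrt 2 : R)^-1 <= 1 by rewrite invf_le1 // (lt_le_trans ltr01 sqrt2_ge1).
by rewrite /omega_chsh; lra.
Qed.

End CHSH.

(* One copy of the experiment: (X_i, U_i, [Xtil_i = bot], A_i, S_i, S'_i). *)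
Definition round := (bool * option bool * bool * bool * bool * bool)%type.

Definition round_fails (t : round) : bool :=
  let: (x, u, _, a, s, _) := t in chsh_fails x u a s.

Definition round_key (t : round) : bool * (bool * option bool * option bool) :=
  let: (x, u, bt, a, _, s') := t in (atil1 u bt a, (atil1 u bt s', u, xtil1 x bt)).

Lemma sum_round (V : nmodType) (F : round -> V) :
  \sum_t F t = \sum_x \sum_u \sum_bt \sum_a \sum_s \sum_s' F (x, u, bt, a, s, s').
Proof. by rewrite !pair_big; apply: eq_bigr => -[[[[[x u] bt] a] s] s'] _. Qed.

Section Round.
Variables (R : realType) (gamma alpha q : R).

Definition round_weight (t : round) : R :=
  let: (x, u, bt, a, s, s') := t in pround gamma alpha q x u bt a s s'.

(* The decryption measurement is complete and sits between two copies of the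
   projective encryption effect, so it drops out of the marginal. *)
Lemma pround_marginal x u bt a s : \sum_s' pround gamma alpha q x u bt a s s' =
  1 / 2 * pU gamma u * pBot alpha bt *
    born (werner q) (aliceP R x a) (recvP R (enc_in u) s).
Proof.
rewrite big_bool /= /pround -mulrDr -bornDr -mulmxDl -mulmxDr.
by rewrite recvP_sum mulmx1 recvP_idem.
Qed.

Lemma sum_round_weight : \sum_t round_weight t = 1.
Proof.
rewrite sum_round /=.
under eq_bigr do under eq_bigr do under eq_bigr do under eq_bigr do
  under eq_bigr do rewrite pround_marginal.
under eq_bigr do under eq_bigr do under eq_bigr do under eq_bigr do
  rewrite big_bool /= -mulrDr -bornDr recvP_sum /aliceP born_werner_proj1.
by rewrite !big_bool !sum_option !big_bool /=; field.
Qed.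

Lemma pCC_round c :
  pCC gamma alpha q c = \sum_t round_weight t * (round_key t == c)%:R.
Proof. by rewrite sum_round. Qed.

Lemma round_fail_prob :
  \sum_t round_weight t * (round_fails t)%:R =
  gamma * ((1 - 2 * q) * (1 - omega_chsh R) + q).
Proof.
have fail_term x u bt a s :
    1 / 2 * pU gamma u * pBot alpha bt *
      born (werner q) (aliceP R x a) (recvP R (enc_in u) s) * (chsh_fails x u a s)%:R =
    pBot alpha bt * (gamma / 4 * ((1 - 2 * q) / 2 * sin (pi / 8) ^+ 2 + q / 2)) *
      (chsh_fails x u a s)%:R.
  case: u => [y|]; last by rewrite /= !mulr0.
  have [fails|_] := boolP (chsh_fails x (Some y) a s); last by rewrite /= !mulr0.
  by rewrite /aliceP /= born_werner_proj (chsh_fail_angle R fails); field.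
rewrite sum_round /=.
under eq_bigr do under eq_bigr do under eq_bigr do under eq_bigr do
  under eq_bigr do rewrite -mulr_suml pround_marginal fail_term.
by rewrite !big_bool !sum_option !big_bool /= sin_pi8_sqr; field.
Qed.

Hypotheses (gamma01 : 0 <= gamma <= 1) (alpha01 : 0 <= alpha <= 1).
Hypotheses (q_ge0 : 0 <= q) (q_le_half : q <= 1 / 2).

Lemma born_werner_sandwich_ge0 th y b y' b' :
  0 <= born (werner q) (Defs.proj th) (recvP R y b *m recvP R y' b' *m recvP R y b).
Proof.
have [c c_ge0 [[ph ->]|->]] := recvP_sandwich R y b y' b'; rewrite bornZr mulr_ge0 //.
- have : 0 <= (1 - 2 * q) * cos (th - ph) ^+ 2.
    by rewrite mulr_ge0 ?sqr_ge0 // subr_ge0; move: q_le_half; lra.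
  by rewrite born_werner_proj; move: q_ge0; lra.
- by rewrite born_werner_proj1.
Qed.

Lemma round_weight_ge0 t : 0 <= round_weight t.
Proof.
have [[g_ge0 g_le1] [a_ge0 a_le1]] := (andP gamma01, andP alpha01).
case: t => [[[[[x u] bt] a] s] s'].
rewrite /= /pround mulr_ge0 ?born_werner_sandwich_ge0 //.
by rewrite !mulr_ge0 //; [case: u => [?|] /= | case: bt => /=]; lra.
Qed.

End Round.

Section Protocol.
Variables (R : realType) (l : nat) (gamma alpha q delta : R).
Variables (Syn : Type) (syn : bits l -> Syn)
  (guess : {ffun 'I_l -> bool * option bool * option bool} -> Syn -> bits l).

Definition decodes (x : bits l) (u : {ffun 'I_l -> option bool}) (bt a s' : bits l) :
    bool :=
  let Xt := [ffun i => xtil1 (x i) (bt i)] in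
  let At := [ffun i => atil1 (u i) (bt i) (a i)] in
  let St := [ffun i => atil1 (u i) (bt i) (s' i)] in
  guess [ffun i => (St i, u i, Xt i)] (syn At) == At.

Lemma run_succeeds m x u bt a s s' r cd :
  (let o := run gamma delta syn guess m x u bt a s s' r cd in o.1 && (o.2 == m)) =
  accepts gamma delta x u a s && decodes x u bt a s'.
Proof.
rewrite /run /decodes /=; case: accepts => //=.
set Ahat := guess _ _; set At := [ffun i => _].
apply/eqP/eqP => [run_eq|->]; apply/ffunP => i.
- have := congr1 (fun f : bits l => f i) run_eq; rewrite /xor_bits !ffunE.
  by move: (m i) (r i) (atil1 (u i) (bt i) (a i)) (Ahat i) => [] [] [] [].
- by rewrite /xor_bits !ffunE; move: (m i) (r i) (atil1 (u i) (bt i) (a i)) => [] [] [].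
Qed.

Lemma sum_keys_uniform m x u bt a s s' (P : R) :
  \sum_(r : bits l) \sum_(cd : bits l) P * (2 ^+ l)^-1 * (2 ^+ l)^-1 *
    (let o := run gamma delta syn guess m x u bt a s s' r cd in o.1 && (o.2 == m))%:R =
  P * (accepts gamma delta x u a s && decodes x u bt a s')%:R.
Proof.
transitivity (\sum_(r : bits l) \sum_(cd : bits l) P * (2 ^+ l)^-1 * (2 ^+ l)^-1 *
    (accepts gamma delta x u a s && decodes x u bt a s')%:R).
  apply: eq_bigr => r _; apply: eq_bigr => cd _.
  by rewrite -(run_succeeds m _ _ _ _ _ _ r cd).
move: (accepts _ _ _ _ _ _ && _) => b.
rewrite !sumr_const card_ffun card_bool card_ord -mulrnA -[X in X = _]mulr_natr natrM natrX.
have two_pow_neq0 : (2 : R) ^+ l != 0 by rewrite expf_neq0 // pnatr_eq0.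
by field.
Qed.

(* Coordinates of a sample, in the nested form produced by [sum_ffun_pair]. *)
Definition sample_x (z : {ffun 'I_l -> round}) : bits l :=
  ffun_fst (ffun_fst (ffun_fst (ffun_fst (ffun_fst z)))).
Definition sample_u (z : {ffun 'I_l -> round}) : {ffun 'I_l -> option bool} :=
  ffun_snd (ffun_fst (ffun_fst (ffun_fst (ffun_fst z)))).
Definition sample_bt (z : {ffun 'I_l -> round}) : bits l :=
  ffun_snd (ffun_fst (ffun_fst (ffun_fst z))).
Definition sample_a (z : {ffun 'I_l -> round}) : bits l :=
  ffun_snd (ffun_fst (ffun_fst z)).
Definition sample_s (z : {ffun 'I_l -> round}) : bits l := ffun_snd (ffun_fst z).
Definition sample_s' (z : {ffun 'I_l -> round}) : bits l := ffun_snd z.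

Definition sample_weight (z : {ffun 'I_l -> round}) : R :=
  \prod_i round_weight gamma alpha q (z i).

Definition accepted (z : {ffun 'I_l -> round}) : bool :=
  accepts gamma delta (sample_x z) (sample_u z) (sample_a z) (sample_s z).

Definition decoded (z : {ffun 'I_l -> round}) : bool :=
  decodes (sample_x z) (sample_u z) (sample_bt z) (sample_a z) (sample_s' z).

Lemma success_probE m : success_prob gamma alpha q delta syn guess m =
  \sum_z sample_weight z * (accepted z && decoded z)%:R.
Proof.
rewrite /success_prob.
under eq_bigr do under eq_bigr do under eq_bigr do under eq_bigr do
  under eq_bigr do under eq_bigr do rewrite sum_keys_uniform.
rewrite !sum_ffun_pair; apply: eq_bigr => z _; congr (_ * _).
by apply: eq_bigr => i _; rewrite !ffunE; case: (z i) => [[[[[? ?] ?] ?] ?] ?].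
Qed.

Lemma decode_failure_probE :
  \sum_z sample_weight z * (~~ decoded z)%:R = ec_error gamma alpha q syn guess.
Proof.
rewrite /ec_error; under [RHS]eq_bigr do under eq_bigr do rewrite pCC_round.
rewrite -sum_prod_ffun_map; apply: eq_bigr => z _.
have key1 : [ffun i => ([ffun i => round_key (z i)] i).1] =
    [ffun i => atil1 (sample_u z i) (sample_bt z i) (sample_a z i)].
  by apply/ffunP => i; rewrite !ffunE; case: (z i) => [[[[[? ?] ?] ?] ?] ?].
have key2 : [ffun i => ([ffun i => round_key (z i)] i).2] =
    [ffun i => ([ffun i => atil1 (sample_u z i) (sample_bt z i) (sample_s' z i)] i,
                sample_u z i, [ffun i => xtil1 (sample_x z i) (sample_bt z i)] i)].
  by apply/ffunP => i; rewrite !ffunE; case: (z i) => [[[[[? ?] ?] ?] ?] ?].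
by rewrite key1 key2.
Qed.

Hypotheses (gamma01 : 0 <= gamma <= 1) (alpha01 : 0 <= alpha <= 1).
Hypotheses (q_ge0 : 0 <= q) (q_le_half : q <= 1 / 2).
Hypotheses (delta_gt0 : 0 < delta) (q_lt_delta : q < delta / 4).

Lemma sample_weight_ge0 z : 0 <= sample_weight z.
Proof. by apply: prodr_ge0 => i _; exact: round_weight_ge0. Qed.

Lemma sum_sample_weight : \sum_z sample_weight z = 1.
Proof. by rewrite sum_prod_ffun sum_round_weight expr1n. Qed.

Lemma reject_prob_le :
  \sum_z sample_weight z * (~~ accepted z)%:R <= expR (- (delta ^+ 2 * l%:R / 8)).
Proof.
have nfailE z : (nfail (sample_x z) (sample_u z) (sample_a z) (sample_s z))%:R =
    \sum_i ((round_fails (z i))%:R : R).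
  rewrite /nfail -sum1_card natr_sum big_mkcond /=; apply: eq_bigr => i _.
  by rewrite inE !ffunE; case: (z i) => [[[[[x [y|]] bt] a] s] s'] //=; case: (_ != _).
have mean_le : gamma * ((1 - 2 * q) * (1 - omega_chsh R) + q) + delta / 4 <=
    gamma * (1 - omega_chsh R) + delta / 2.
  have := omega_chsh_ge_half R; have := omega_chsh_le1 R.
  set w := omega_chsh R => w_le1 w_ge_half; have [g_ge0 g_le1] := andP gamma01.
  have : gamma * (q * (2 * w - 1)) <= q.
    apply: (@le_trans _ _ (q * (2 * w - 1))).
      by rewrite ler_piMl // mulr_ge0 //; lra.
    by rewrite ler_piMr //; lra.
  move: q_lt_delta; lra.
have s_ge0 : 0 <= delta / 4 by rewrite divr_ge0 // ltW.
have c_ge : (\sum_t round_weight gamma alpha q t * (round_fails t)%:R + delta / 4) *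
    #|'I_l|%:R <= (gamma * (1 - omega_chsh R) + delta / 2) * l%:R.
  by rewrite round_fail_prob card_ord ler_wpM2r.
rewrite /sample_weight; under eq_bigr do rewrite /accepted /accepts nfailE.
apply: le_trans (hoeffding_bound (round_weight_ge0 gamma01 alpha01 q_ge0 q_le_half)
  (sum_round_weight gamma alpha q) s_ge0 c_ge) _.
by rewrite card_ord (_ : 2 * (delta / 4) ^+ 2 * l%:R = delta ^+ 2 * l%:R / 8) //; field.
Qed.

End Protocol.

Theorem theorem23 (R : realType) (lam : nat)
  (gamma alpha xi delta kappa q : R)
  (Hgamma : 0 < gamma < 1) (Halpha : 0 < alpha < 1) (Hxi : 1 < xi)
  (Hdelta : 0 < delta) (Hkappa : 0 < kappa)
  (Hq : 0 <= q <= 1 / 2) (Hqdelta : q < delta / 4)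
  (Hsyn : 2 * xi * (1 - gamma) * (1 - alpha) * h2 q
          < kappa * delta ^+ 3 * alpha ^+ 4)
  (p_err : nat -> R)
  (Syn : Type) (syn : bits lam -> Syn)
  (guess : {ffun 'I_lam -> bool * option bool * option bool} -> Syn -> bits lam)
  (Hec : ec_error gamma alpha q syn guess <= p_err lam)
  (m : bits lam) :
  success_prob gamma alpha q delta syn guess m
    >= 1 - (expR (- (delta ^+ 2 * lam%:R / 8)) + p_err lam).
Proof.
(* [xi], [kappa] and [Hsyn] only constrain the syndrome length, which matters
   for security but not for completeness. *)
have gamma01 : 0 <= gamma <= 1 by case/andP: Hgamma => *; rewrite !ltW.
have alpha01 : 0 <= alpha <= 1 by case/andP: Halpha => *; rewrite !ltW.
have [q_ge0 q_le_half] := andP Hq.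
have W_ge0 := sample_weight_ge0 gamma01 alpha01 q_ge0 q_le_half.
have W_sum1 := sum_sample_weight lam gamma alpha q.
rewrite success_probE; apply: le_trans _ (sum_andb_ge _ _ (W_ge0 lam) W_sum1).
have := reject_prob_le lam gamma01 alpha01 q_ge0 q_le_half Hdelta Hqdelta.
by rewrite decode_failure_probE; lra.
Qed.
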